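(* Let $A, C, D$ be binary random variables, with $A$ taking values $a,\overline{a}$, $C$ taking values $c,\overline{c}$, $D$ taking values $d,\overline{d}$, and let $Y$ be a real random variable with finite expectation. Suppose the joint distribution factorizes as \[ p(A,C,D,Y)=p(D)\,p(C\mid D)\,p(A\mid C)\,p(Y\mid A,C). \] Assume that $C$ and $D$ are dependent, and that every event $\{A=x, C=y, D=z\}$ has positive probability. If $E[Y\mid A,C]$ and $E[A\mid C]$ are both nondecreasing or both nonincreasing in $C$, then $E[Y\mid A,D]$ and $E[A\mid D]$ are both nondecreasing or both nonincreasing in $D$. If $E[Y\mid A,C]$ and $E[A\mid C]$ are one nondecreasing and the other nonincreasing in $C$, then $E[Y\mid A,D]$ and $E[A\mid D]$ are one nondecreasing and the other nonincreasing in $D$.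
   Context: $E[Y\mid A,C]$ is nondecreasing in $C$ if $E[Y\mid a,c]\ge E[Y\mid a,\overline{c}]$ and $E[Y\mid \overline{a},c]\ge E[Y\mid \overline{a},\overline{c}]$, nonincreasing if both inequalities are reversed; analogously for $D$. With $a=1,\overline{a}=0$, $E[A\mid C]=p(a\mid C)$ is nondecreasing in $C$ if $p(a\mid c)\ge p(a\mid\overline{c})$ and nonincreasing if $p(a\mid c)\le p(a\mid\overline{c})$; analogously for $D$. *)

From HB Require Import structures.
From mathcomp Require Import all_boot all_order all_algebra.
From mathcomp Require Import all_classical all_reals all_analysis.
Set Implicit Arguments. Unset Strict Implicit. Unset Printing Implicit Defensive.
Import Order.TTheory GRing.Theory Num.Theory.
Local Open Scope classical_set_scope.
Local Open Scope ring_scope.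

Section Defs.
Context (d : measure_display) (T : measurableType d) (R : realType)
        (P : probability T R).

Definition ev (X : T -> bool) (x : bool) : set T := X @^-1` [set x].

Definition prob (S : set T) : R := fine (P S).

Definition cprob (S B : set T) : R := prob (S `&` B) / prob B.

Definition cexp (Y : T -> R) (B : set T) : R :=
  fine (\int[P]_(t in B) (Y t)%:E) / prob B.

(* Convention: for a binary variable, the value "a" is [true] and
   "abar" is [false]. *)

Definition EY_nondec (Y : T -> R) (X Z : T -> bool) : Prop :=
  forall x, cexp Y (ev X x `&` ev Z false) <= cexp Y (ev X x `&` ev Z true).

Definition EY_noninc (Y : T -> R) (X Z : T -> bool) : Prop :=
  forall x, cexp Y (ev X x `&` ev Z true) <= cexp Y (ev X x `&` ev Z false).

(* E[X | Z] = p(X = a | Z) is nondecreasing in Z *)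
Definition EA_nondec (X Z : T -> bool) : Prop :=
  cprob (ev X true) (ev Z false) <= cprob (ev X true) (ev Z true).

Definition EA_noninc (X Z : T -> bool) : Prop :=
  cprob (ev X true) (ev Z true) <= cprob (ev X true) (ev Z false).

End Defs.

(* The factorization makes Y independent of D given A and C, so conditioning on
   {A = x, C = y, D = z} gives the same expectation m_y of Y as conditioning on
   {A = x, C = y}.  Hence E[Y | A = x, D = z] is the mean of m_c and m_cbar weighted by
   q(x, y, z) = p(A = x, C = y, D = z), and p(a | D = z) is the mean of p(a | c) and
   p(a | cbar) weighted by p(C = y | D = z).  Writing v_z = p(c | D = z), the weights
   satisfy q(x,c,d) q(x,cbar,dbar) - q(x,cbar,d) q(x,c,dbar)
   = p(d) p(dbar) p(x | c) p(x | cbar) (v_d - v_dbar), so both D-differences are positive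
   multiples of (v_d - v_dbar) times the corresponding C-differences.  Dependence of C
   and D means v_d <> v_dbar: passing from C to D preserves both directions of
   monotonicity or reverses both. *)

From HB Require Import structures.
From mathcomp Require Import all_boot all_order all_algebra.
From mathcomp Require Import all_classical all_reals all_analysis.
From mathcomp Require Import measurable_realfun ring.
Import Order.TTheory GRing.Theory Num.Theory.
Local Open Scope classical_set_scope.
Local Open Scope ring_scope.
Set Implicit Arguments. Unset Strict Implicit. Unset Printing Implicit Defensive.

Section integral_mrestr.
Local Open Scope ereal_scope.
Context d (T : measurableType d) (R : realType) (m : {measure set T -> \bar R}).
Variables (S : set T) (mS : measurable S).

Lemma integral_mrestr (f : T -> \bar R) : measurable_fun setT f ->
  \int[mrestr m mS]_x f x = \int[m]_(x in S) f x.
Proof.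
move=> mf; rewrite -(setUv S) integral_setU//; last 3 first.
- exact: measurableC.
- by rewrite setUv.
- by rewrite disj_set2E setICr.
rewrite [X in _ + X](eq_measure_integral mzero) => [|A mA AnS].
  rewrite integral_measure_zero adde0.
  by apply: eq_measure_integral => A mA AS; rewrite /= /mrestr setIidl.
by move/disj_setPLR/disj_set2P: AnS; rewrite /= /mrestr => ->; rewrite measure0.
Qed.

End integral_mrestr.

Section integral_preimage_scale.
Local Open Scope ereal_scope.
Context d (T : measurableType d) (R : realType) (m : {measure set T -> \bar R}).
Variables (Y : T -> R) (S1 S2 : set T) (k : {nonneg R}).
Hypotheses (mY : measurable_fun setT Y) (mS1 : measurable S1) (mS2 : measurable S2).
Hypothesis preimage_scale : forall B, measurable B ->
  m (Y @^-1` B `&` S1) = k%:num%:E * m (Y @^-1` B `&` S2).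

Lemma ge0_integral_preimage_scale (g : R -> \bar R) :
  measurable_fun setT g -> (forall r, 0 <= g r) ->
  \int[m]_(x in S1) g (Y x) = k%:num%:E * \int[m]_(x in S2) g (Y x).
Proof.
move=> mg g0; have mgY : measurable_fun setT (g \o Y) by exact: measurableT_comp.
have pushE (S : set T) (mS : measurable S) :
    \int[mrestr m mS]_x (g \o Y) x = \int[pushforward (mrestr m mS) Y]_y g y.
  by rewrite ge0_integral_pushforward ?preimage_setT.
rewrite -(integral_mrestr _ mS1 mgY) -(integral_mrestr _ mS2 mgY) !pushE.
rewrite -ge0_integral_mscale//; apply: eq_measure_integral => B mB _.
exact: preimage_scale.
Qed.

Lemma integral_preimage_scale : m.-integrable S2 (EFin \o Y) ->
  \int[m]_(x in S1) (Y x)%:E = k%:num%:E * \int[m]_(x in S2) (Y x)%:E.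
Proof.
move=> iY; rewrite integralE [X in _ = _ * X]integralE muleBr//; last first.
  by rewrite fin_num_adde_defl// fin_numN; apply/integrable_fin_num/integrable_funeneg.
have mEFin : measurable_fun setT (@EFin R) by exact: EFin_measurable.
congr (_ - _).
- rewrite (funepos_comp (@EFin R) Y).
  exact: ge0_integral_preimage_scale (measurable_funepos mEFin) (funepos_ge0 _).
- rewrite (funeneg_comp (@EFin R) Y).
  exact: ge0_integral_preimage_scale (measurable_funeneg mEFin) (funeneg_ge0 _).
Qed.

End integral_preimage_scale.

Section probability.
Context d (T : measurableType d) (R : realType) (P : probability T R).
Implicit Types (S : set T) (X : T -> bool).

Lemma probE S : measurable S -> P S = (prob P S)%:E.
Proof. by move=> mS; rewrite fineK// fin_num_measure. Qed.

Lemma prob_ge0 S : 0 <= prob P S.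
Proof. exact/fine_ge0/measure_ge0. Qed.

Lemma prob_gt0 S : measurable S -> (0 < P S)%E -> 0 < prob P S.
Proof. by move=> mS; rewrite probE// lte_fin. Qed.

Lemma le_prob S S' : measurable S -> measurable S' -> S `<=` S' -> prob P S <= prob P S'.
Proof.
move=> mS mS' SS'; rewrite -lee_fin -!probE//.
by apply: le_measure; rewrite ?inE.
Qed.

Lemma prob_setT : prob P setT = 1.
Proof. by rewrite /prob probability_setT. Qed.

Lemma setI_ev_split S X : S = (S `&` ev X true) `|` (S `&` ev X false).
Proof.
apply/seteqP; split=> [t St|t [] []//].
by rewrite /ev/=; case: (X t); [left|right].
Qed.

Lemma setI_ev_disj S X : [disjoint S `&` ev X true & S `&` ev X false].
Proof. by apply/disj_setPS => t [[_ +] [_]]; rewrite /ev/= => ->. Qed.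

Section ev_split.
Variables (X : T -> bool) (mX : forall b, measurable (ev X b)).
Variables (S : set T) (mS : measurable S).

Lemma prob_ev_split : prob P S = prob P (S `&` ev X true) + prob P (S `&` ev X false).
Proof.
have mSX b : measurable (S `&` ev X b) by exact: measurableI.
rewrite {1}(setI_ev_split S X) /prob measureU//; last exact/disj_set2P/setI_ev_disj.
by rewrite fineD// fin_num_measure.
Qed.

Lemma Rintegral_ev_split (Y : T -> R) : P.-integrable setT (EFin \o Y) ->
  \int[P]_(t in S) Y t =
  \int[P]_(t in S `&` ev X true) Y t + \int[P]_(t in S `&` ev X false) Y t.
Proof.
move=> iY; rewrite {1}(setI_ev_split S X) Rintegral_setU ?setI_ev_disj//.
- exact: measurableI.
- exact: measurableI.
- by rewrite -setI_ev_split; exact: integrableS iY.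
Qed.

Lemma cexp_ev_split (Y : T -> R) : P.-integrable setT (EFin \o Y) ->
  (forall b, prob P (S `&` ev X b) != 0) ->
  cexp P Y S =
  (prob P (S `&` ev X true) * cexp P Y (S `&` ev X true) +
   prob P (S `&` ev X false) * cexp P Y (S `&` ev X false)) /
  (prob P (S `&` ev X true) + prob P (S `&` ev X false)).
Proof.
move=> iY p_neq0; rewrite /cexp -prob_ev_split.
have := Rintegral_ev_split iY; rewrite /Rintegral => ->.
by rewrite !(mulrC (prob P _)) !divfK.
Qed.

End ev_split.

Lemma prob_setI_cprob S (B : set T) : prob P B != 0 -> prob P (S `&` B) = cprob P S B * prob P B.
Proof. by move=> pB; rewrite divfK. Qed.

Lemma cprob_ev_sum X (B : set T) : (forall b, measurable (ev X b)) -> measurable B ->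
  prob P B != 0 -> cprob P (ev X true) B + cprob P (ev X false) B = 1.
Proof.
move=> mX mB pB; rewrite -mulrDl !(setIC (ev X _)) -prob_ev_split//.
exact: divff.
Qed.

Lemma cexp_eq_of_cprob (Y : T -> R) S1 S2 :
  measurable_fun setT Y -> P.-integrable setT (EFin \o Y) ->
  measurable S1 -> measurable S2 -> prob P S1 != 0 -> prob P S2 != 0 ->
  (forall B : set R, measurable B -> cprob P (Y @^-1` B) S1 = cprob P (Y @^-1` B) S2) ->
  cexp P Y S1 = cexp P Y S2.
Proof.
move=> mY iY mS1 mS2 p1 p2 cY.
pose k := NngNum (divr_ge0 (prob_ge0 S1) (prob_ge0 S2)).
have preimage_scale (B : set R) : measurable B ->
    P (Y @^-1` B `&` S1) = (k%:num%:E * P (Y @^-1` B `&` S2))%E.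
  move=> mB; have mYB : measurable (Y @^-1` B) by rewrite -[_ @^-1` _]setTI; exact: mY.
  rewrite !probE//; try exact: measurableI.
  rewrite -EFinM; congr (_%:E).
  by rewrite (prob_setI_cprob _ p1) cY// /cprob /=; ring.
rewrite /cexp (integral_preimage_scale mY mS1 mS2 preimage_scale (integrableS _ _ _ iY))//.
rewrite fineM//; last exact/integrable_fin_num/(integrableS measurableT).
by rewrite /=; field; apply/andP.
Qed.

Lemma ev_indep_of_cprob_eq (C D : T -> bool) :
  (forall b, measurable (ev C b)) -> (forall b, measurable (ev D b)) ->
  (forall b, prob P (ev D b) != 0) ->
  cprob P (ev C true) (ev D true) = cprob P (ev C true) (ev D false) ->
  forall y z, prob P (ev C y `&` ev D z) = prob P (ev C y) * prob P (ev D z).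
Proof.
move=> mC mD pD cC y z.
have cCy b : cprob P (ev C y) (ev D b) = cprob P (ev C y) (ev D true).
  case: b => //; case: y; first by rewrite cC.
  apply: (@addrI _ (cprob P (ev C true) (ev D true))).
  by rewrite cprob_ev_sum// cC cprob_ev_sum.
have prob_D_sum : prob P (ev D true) + prob P (ev D false) = 1.
  by rewrite -prob_setT (prob_ev_split mD measurableT) !setTI.
have prob_C : prob P (ev C y) = cprob P (ev C y) (ev D true).
  rewrite (prob_ev_split mD (mC y)) !prob_setI_cprob// !cCy.
  by rewrite -mulrDr prob_D_sum mulr1.
by rewrite prob_setI_cprob// prob_C cCy.
Qed.

End probability.

Lemma wmean2_sub (R : fieldType) (a1 b1 a0 b0 m1 m0 : R) :
  a1 + b1 != 0 -> a0 + b0 != 0 ->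
  (a1 * m1 + b1 * m0) / (a1 + b1) - (a0 * m1 + b0 * m0) / (a0 + b0) =
  (a1 * b0 - b1 * a0) / ((a1 + b1) * (a0 + b0)) * (m1 - m0).
Proof. by move=> n1 n0; field; apply/andP. Qed.

Section sub_scale.
Variables (R : numDomainType) (c a0 a1 b0 b1 : R).
Hypothesis sub_scale : a1 - a0 = c * (b1 - b0).

Lemma ler_sub_pscale : 0 < c -> ((a0 <= a1) = (b0 <= b1)) * ((a1 <= a0) = (b1 <= b0)).
Proof.
move=> c_gt0; rewrite -[a0 <= a1]subr_ge0 -[a1 <= a0]subr_le0 sub_scale.
by rewrite pmulr_rge0// pmulr_rle0// subr_ge0 subr_le0.
Qed.

Lemma ler_sub_nscale : c < 0 -> ((a0 <= a1) = (b1 <= b0)) * ((a1 <= a0) = (b0 <= b1)).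
Proof.
move=> c_lt0; rewrite -[a0 <= a1]subr_ge0 -[a1 <= a0]subr_le0 sub_scale.
by rewrite nmulr_rge0// nmulr_rle0// subr_ge0 subr_le0.
Qed.

End sub_scale.

Section factorization.
Context d (T : measurableType d) (R : realType) (P : probability T R).
Variables (A C D : T -> bool) (Y : T -> R).
Hypotheses (mA : forall x, measurable (ev A x)) (mC : forall y, measurable (ev C y))
  (mD : forall z, measurable (ev D z)).
Hypotheses (mY : measurable_fun setT Y) (iY : P.-integrable setT (EFin \o Y)).
Hypothesis factorization : forall (x y z : bool) (B : set R), measurable B ->
  prob P (ev A x `&` ev C y `&` ev D z `&` Y @^-1` B) =
  prob P (ev D z) * cprob P (ev C y) (ev D z) * cprob P (ev A x) (ev C y)
    * cprob P (Y @^-1` B) (ev A x `&` ev C y).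
Hypothesis ACD_pos : forall x y z : bool, (0 < P (ev A x `&` ev C y `&` ev D z))%E.

Local Notation q x y z := (prob P (ev A x `&` ev C y `&` ev D z)).
Local Notation dCD := (cprob P (ev C true) (ev D true) - cprob P (ev C true) (ev D false)).

Let mAC x y : measurable (ev A x `&` ev C y) := measurableI _ _ (mA x) (mC y).
Let mACD x y z : measurable (ev A x `&` ev C y `&` ev D z) :=
  measurableI _ _ (mAC x y) (mD z).

Lemma prob_ACD_gt0 x y z : 0 < q x y z.
Proof. exact: prob_gt0 (mACD x y z) (ACD_pos x y z). Qed.

Lemma prob_AC_gt0 x y : 0 < prob P (ev A x `&` ev C y).
Proof. by apply: (lt_le_trans (prob_ACD_gt0 x y true)); apply: le_prob => // t []. Qed.

Lemma prob_C_gt0 y : 0 < prob P (ev C y).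
Proof. by apply: (lt_le_trans (prob_ACD_gt0 true y true)); apply: le_prob => // t [[]]. Qed.

Lemma prob_D_gt0 z : 0 < prob P (ev D z).
Proof. by apply: (lt_le_trans (prob_ACD_gt0 true true z)); apply: le_prob => // t []. Qed.

Lemma prob_ACD_factor x y z :
  q x y z = prob P (ev D z) * cprob P (ev C y) (ev D z) * cprob P (ev A x) (ev C y).
Proof.
have := factorization x y z measurableT; rewrite preimage_setT setIT => ->.
by rewrite /cprob setTI divff ?mulr1// gt_eqF// prob_AC_gt0.
Qed.

Lemma cprob_Y_ACD x y z (B : set R) : measurable B ->
  cprob P (Y @^-1` B) (ev A x `&` ev C y `&` ev D z) =
  cprob P (Y @^-1` B) (ev A x `&` ev C y).
Proof.
move=> mB; rewrite {1}/cprob setIC factorization// -prob_ACD_factor.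
by rewrite mulrC mulKf// gt_eqF// prob_ACD_gt0.
Qed.

Lemma cexp_ACD x y z : cexp P Y (ev A x `&` ev C y `&` ev D z) = cexp P Y (ev A x `&` ev C y).
Proof.
apply: cexp_eq_of_cprob mY iY (mACD x y z) (mAC x y) _ _ (cprob_Y_ACD x y z).
- by rewrite gt_eqF// prob_ACD_gt0.
- by rewrite gt_eqF// prob_AC_gt0.
Qed.

Lemma cexp_AD x z : cexp P Y (ev A x `&` ev D z) =
  (q x true z * cexp P Y (ev A x `&` ev C true) +
   q x false z * cexp P Y (ev A x `&` ev C false)) / (q x true z + q x false z).
Proof.
rewrite (cexp_ev_split mC (measurableI _ _ (mA x) (mD z)) iY).
  by rewrite !(setIAC _ (ev D z)) !cexp_ACD.
by move=> b; rewrite setIAC gt_eqF// prob_ACD_gt0.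
Qed.

Lemma cprob_AC_gt0 x y : 0 < cprob P (ev A x) (ev C y).
Proof. by rewrite divr_gt0// ?prob_AC_gt0// prob_C_gt0. Qed.

Lemma cprob_C_false z : cprob P (ev C false) (ev D z) = 1 - cprob P (ev C true) (ev D z).
Proof.
have := cprob_ev_sum (P := P) mC (mD z) (lt0r_neq0 (prob_D_gt0 z)).
by move=> <-; rewrite addrC addKr.
Qed.

Lemma cprob_AD z : cprob P (ev A true) (ev D z) =
  cprob P (ev C true) (ev D z) * cprob P (ev A true) (ev C true) +
  (1 - cprob P (ev C true) (ev D z)) * cprob P (ev A true) (ev C false).
Proof.
rewrite {1}/cprob (prob_ev_split P mC (measurableI _ _ (mA true) (mD z))).
rewrite !(setIAC _ (ev D z)) !prob_ACD_factor cprob_C_false -!mulrA -mulrDr.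
by rewrite mulrC mulKf// lt0r_neq0// prob_D_gt0.
Qed.

Lemma cprob_AD_sub : cprob P (ev A true) (ev D true) - cprob P (ev A true) (ev D false) =
  dCD * (cprob P (ev A true) (ev C true) - cprob P (ev A true) (ev C false)).
Proof. by rewrite !cprob_AD; ring. Qed.

Lemma prob_ACD_cross x : q x true true * q x false false - q x false true * q x true false =
  prob P (ev D true) * prob P (ev D false) *
  cprob P (ev A x) (ev C true) * cprob P (ev A x) (ev C false) * dCD.
Proof. by rewrite !prob_ACD_factor !cprob_C_false; ring. Qed.

Lemma cexp_AD_sub x : exists2 k, 0 < k &
  cexp P Y (ev A x `&` ev D true) - cexp P Y (ev A x `&` ev D false) =
  k * dCD * (cexp P Y (ev A x `&` ev C true) - cexp P Y (ev A x `&` ev C false)).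
Proof.
have weights_gt0 z : 0 < q x true z + q x false z by rewrite addr_gt0// prob_ACD_gt0.
rewrite !cexp_AD wmean2_sub ?lt0r_neq0// prob_ACD_cross.
exists (prob P (ev D true) * prob P (ev D false) *
  cprob P (ev A x) (ev C true) * cprob P (ev A x) (ev C false) /
  ((q x true true + q x false true) * (q x true false + q x false false))).
  by rewrite divr_gt0 ?mulr_gt0 ?prob_D_gt0 ?prob_AC_gt0 ?invr_gt0 ?prob_C_gt0.
by rewrite [X in X * _ = _]mulrAC.
Qed.

Lemma dCD_neq0 : ~ (forall y z : bool,
    prob P (ev C y `&` ev D z) = prob P (ev C y) * prob P (ev D z)) ->
  dCD != 0.
Proof.
move=> dep; rewrite subr_eq0; apply/eqP => cC; apply: dep.
by apply: ev_indep_of_cprob_eq cC => // z; rewrite gt_eqF// prob_D_gt0.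
Qed.

Lemma monotonicity_preserved : 0 < dCD ->
  [/\ EY_nondec P Y A D = EY_nondec P Y A C, EY_noninc P Y A D = EY_noninc P Y A C,
      EA_nondec P A D = EA_nondec P A C & EA_noninc P A D = EA_noninc P A C].
Proof.
move=> dCD_gt0; have EA := ler_sub_pscale cprob_AD_sub dCD_gt0.
split.
- apply: eq_forall => x; have [k k_gt0 EY] := cexp_AD_sub x.
  by rewrite (ler_sub_pscale EY _).1 ?mulr_gt0.
- apply: eq_forall => x; have [k k_gt0 EY] := cexp_AD_sub x.
  by rewrite (ler_sub_pscale EY _).2 ?mulr_gt0.
- by rewrite /EA_nondec EA.1.
- by rewrite /EA_noninc EA.2.
Qed.

Lemma monotonicity_reversed : dCD < 0 ->
  [/\ EY_nondec P Y A D = EY_noninc P Y A C, EY_noninc P Y A D = EY_nondec P Y A C,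
      EA_nondec P A D = EA_noninc P A C & EA_noninc P A D = EA_nondec P A C].
Proof.
move=> dCD_lt0; have EA := ler_sub_nscale cprob_AD_sub dCD_lt0.
split.
- apply: eq_forall => x; have [k k_gt0 EY] := cexp_AD_sub x.
  by rewrite (ler_sub_nscale EY _).1 ?pmulr_rlt0.
- apply: eq_forall => x; have [k k_gt0 EY] := cexp_AD_sub x.
  by rewrite (ler_sub_nscale EY _).2 ?pmulr_rlt0.
- by rewrite /EA_nondec EA.1.
- by rewrite /EA_noninc EA.2.
Qed.

End factorization.

Unset Implicit Arguments. Set Strict Implicit.

Theorem theorem8 (d : measure_display) (T : measurableType d) (R : realType)
  (P : probability T R) (A C D : T -> bool) (Y : T -> R)
  (mA : forall x, measurable (ev A x))
  (mC : forall y, measurable (ev C y))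
  (mD : forall z, measurable (ev D z))
  (mY : measurable_fun setT Y)
  (iY : P.-integrable setT (EFin \o Y))
  (* p(A,C,D,Y) = p(D) p(C|D) p(A|C) p(Y|A,C) *)
  (fact : forall (x y z : bool) (B : set R), measurable B ->
     prob P (ev A x `&` ev C y `&` ev D z `&` Y @^-1` B) =
     prob P (ev D z) * cprob P (ev C y) (ev D z) * cprob P (ev A x) (ev C y)
       * cprob P (Y @^-1` B) (ev A x `&` ev C y))
  (* C and D are dependent *)
  (dep : ~ (forall y z : bool,
       prob P (ev C y `&` ev D z) = prob P (ev C y) * prob P (ev D z)))
  (* every event {A = x, C = y, D = z} has positive probability *)
  (pos : forall x y z : bool, (0 < P (ev A x `&` ev C y `&` ev D z))%E) :
  ((EY_nondec P Y A C /\ EA_nondec P A C) \/ (EY_noninc P Y A C /\ EA_noninc P A C) ->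
   (EY_nondec P Y A D /\ EA_nondec P A D) \/ (EY_noninc P Y A D /\ EA_noninc P A D))
  /\
  ((EY_nondec P Y A C /\ EA_noninc P A C) \/ (EY_noninc P Y A C /\ EA_nondec P A C) ->
   (EY_nondec P Y A D /\ EA_noninc P A D) \/ (EY_noninc P Y A D /\ EA_nondec P A D)).
Proof.
have := dCD_neq0 mA mC mD pos dep; rewrite neq_lt => /orP[dCD_lt0|dCD_gt0].
- have [-> -> -> ->] := monotonicity_reversed mA mC mD mY iY fact pos dCD_lt0.
  tauto.
- have [-> -> -> ->] := monotonicity_preserved mA mC mD mY iY fact pos dCD_gt0.
  tauto.
Qed.
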